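(* For arbitrary natural numbers $N>n$ and any $r\in\mathcal R_N$, the projection $\chi^r_n:A(r)\to A(p_n(r))$, $(b_1,\dots,b_N)\mapsto(b_1,\dots,b_n)$, is surjective; i.e. for each $a=(a_1,\dots,a_n)\in A(p_n(r))$ there exists $(b_{n+1},\dots,b_N)$ with $(a_1,\dots,a_n,b_{n+1},\dots,b_N)\in A(r)$.
   Context: $\mathcal R_N$ is the set of real symmetric $N\times N$ matrices with zero diagonal, nonnegative entries and $r_{i,k}+r_{k,j}\ge r_{i,j}$; $p_n(r)$ is the upper-left $n\times n$ corner of $r$. For a distance matrix $q$ of order $m$, $A(q)=\{a\in\mathbb R^m: |a_i-a_j|\le q_{i,j}\le a_i+a_j\ \forall i,j\}$. *)

From mathcomp Require Import all_boot all_order all_algebra.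
From mathcomp Require Import reals.
Set Implicit Arguments. Unset Strict Implicit. Unset Printing Implicit Defensive.
Import Order.TTheory GRing.Theory Num.Theory.
Local Open Scope ring_scope.

Definition distmx (R : realType) (N : nat) (r : 'M[R]_N) : Prop :=
  [/\ forall i j, r i j = r j i,
      forall i, r i i = 0,
      forall i j, 0 <= r i j
    & forall i j k, r i j <= r i k + r k j].

Definition corner (R : realType) (N n : nat) (hn : (n <= N)%N) (r : 'M[R]_N)
  : 'M[R]_n :=
  \matrix_(i < n, j < n) r (widen_ord hn i) (widen_ord hn j).

Definition Aset (R : realType) (m : nat) (q : 'M[R]_m) (a : 'I_m -> R) : Prop :=
  forall i j, `|a i - a j| <= q i j /\ q i j <= a i + a j.

(** The extension is the McShane (inf-convolution) formula
    [b k = min_j (a_j + r_{j k})] over the prescribed points [j]: the triangle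
    inequality makes [b] 1-Lipschitz for [r], the bound [r_{i j} <= a_i + a_j]
    on the prescribed points propagates to [r_{k l} <= b_k + b_l], and the
    Lipschitz bound on [a] makes [b] agree with [a] where [a] is given.  When
    nothing is prescribed ([n = 0]) one prescribes the value [0] at a single
    point, so that [b] is the distance to that point. *)
From mathcomp Require Import all_boot all_order all_algebra.
From mathcomp Require Import reals.
From mathcomp Require Import lra.
Import Order.TTheory GRing.Theory Num.Theory.
Local Open Scope ring_scope.

Section McShaneExtension.

Variables (R : realType) (N m : nat) (r : 'M[R]_N).
Hypotheses (r_sym : forall i j, r i j = r j i) (r_diag : forall i, r i i = 0)
  (r_triangle : forall i j k, r i j <= r i k + r k j).

Variables (s : 'I_m.+1 -> 'I_N) (a : 'I_m.+1 -> R).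
Hypothesis a_in_A : Aset (\matrix_(i, j) r (s i) (s j)) a.

Definition mcshane_arg (k : 'I_N) : 'I_m.+1 :=
  Order.arg_min ord0 xpredT (fun j => a j + r (s j) k).

Definition mcshane (k : 'I_N) : R :=
  a (mcshane_arg k) + r (s (mcshane_arg k)) k.

Lemma mcshane_le k j : mcshane k <= a j + r (s j) k.
Proof. by rewrite /mcshane /mcshane_arg; case: arg_minP => // i _; apply. Qed.

Lemma mcshane_lipschitz k l : mcshane k <= mcshane l + r k l.
Proof.
apply: (le_trans (mcshane_le k (mcshane_arg l))).
by rewrite /mcshane -addrA lerD2l (r_sym k l).
Qed.

Lemma mcshane_dist k l : `|mcshane k - mcshane l| <= r k l.
Proof.
have := mcshane_lipschitz k l; have := mcshane_lipschitz l k.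
by rewrite ler_norml (r_sym l k); lra.
Qed.

Lemma dist_le_mcshaneD k l : r k l <= mcshane k + mcshane l.
Proof.
rewrite /mcshane; set i := mcshane_arg k; set j := mcshane_arg l.
have [_] := a_in_A i j; rewrite mxE => rA.
have := r_triangle k l (s i); have := r_triangle (s i) l (s j).
by rewrite (r_sym k (s i)); lra.
Qed.

Lemma mcshane_extends i : mcshane (s i) = a i.
Proof.
apply/eqP; rewrite eq_le; apply/andP; split.
  by apply: le_trans (mcshane_le _ i) _; rewrite r_diag addr0.
rewrite /mcshane; set j := mcshane_arg (s i).
have [+ _] := a_in_A i j; rewrite mxE ler_norml (r_sym (s i) (s j)); lra.
Qed.

Lemma Aset_mcshane : Aset r mcshane.
Proof. by move=> k l; rewrite mcshane_dist dist_le_mcshaneD. Qed.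

End McShaneExtension.

Lemma Aset_extend (R : realType) (N m : nat) (r : 'M[R]_N)
    (s : 'I_m.+1 -> 'I_N) (a : 'I_m.+1 -> R) :
  distmx r -> Aset (\matrix_(i, j) r (s i) (s j)) a ->
  exists b : 'I_N -> R, Aset r b /\ forall i, b (s i) = a i.
Proof.
case=> r_sym r_diag _ r_triangle a_in_A; exists (@mcshane _ _ _ r s a); split.
  exact: Aset_mcshane.
exact: mcshane_extends.
Qed.

Theorem lemma4 (R : realType) (N n : nat) (hnN : (n < N)%N) (r : 'M[R]_N) :
  distmx r ->
  forall a : 'I_n -> R, Aset (corner (ltnW hnN) r) a ->
  exists b : 'I_N -> R, Aset r b /\ (forall i : 'I_n, b (widen_ord (ltnW hnN) i) = a i).
Proof.
case: n hnN => [|n] hnN rD a a_in_A; last exact: Aset_extend rD a_in_A.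
have [] := @Aset_extend R N 0 r (fun=> Ordinal hnN) (fun=> 0) rD.
  by move=> i j; rewrite !mxE; case: rD => _ -> _ _; rewrite subrr normr0 addr0.
by move=> b [b_in_A _]; exists b; split=> // -[].
Qed.
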